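(* Let $n\geq 2$. For $x\in[0,1]$ let $X^{(x)}_n$ be a random variable taking values in $\{0,1,\ldots,n\}$ with $$P\left(X^{(x)}_n=k\right)=\binom{n}{k}\frac{x^{(k,c(x))}\,(1-x)^{(n-k,c(x))}}{1^{(n,c(x))}},\qquad c(x)=-\frac{\min\{x,1-x\}}{n-1},\quad k\in\{0,\ldots,n\}.$$ Then for all $0\leq x\leq y\leq 1$ we have $X^{(x)}_n\leq_{\mathrm{st}} X^{(y)}_n$.
   Context: For real $z$ and $h$, the rising factorial with increment $h$ is $z^{(0,h)}=1$ and $z^{(m,h)}=z(z+h)\cdots(z+(m-1)h)$ for integers $m\geq 1$. $X^{(x)}_n$ is the number of white balls drawn in $n$ draws from a Pólya urn initially containing $x$ white and $1-x$ black balls with replacement parameter $c(x)$. For random variables $X,Y$, $X\leq_{\mathrm{st}}Y$ (usual stochastic order) means that their distribution functions satisfy $F_X(t)\geq F_Y(t)$ for all $t\in\mathbb{R}$. *)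

From mathcomp Require Import all_boot all_order all_algebra.
Set Implicit Arguments. Unset Strict Implicit. Unset Printing Implicit Defensive.
Import Order.TTheory GRing.Theory Num.Theory.
Local Open Scope ring_scope.

(* rising factorial with increment h: z^(m,h) = z (z+h) ... (z+(m-1)h), z^(0,h) = 1 *)
Definition rfact {R : realFieldType} (z h : R) (m : nat) : R :=
  \prod_(i < m) (z + i%:R * h).

Definition cpar {R : realFieldType} (n : nat) (x : R) : R :=
  - Num.min x (1 - x) / (n.-1)%:R.

Definition polya_pmf {R : realFieldType} (n : nat) (x : R) (k : nat) : R :=
  'C(n, k)%:R * rfact x (cpar n x) k * rfact (1 - x) (cpar n x) (n - k)
  / rfact 1 (cpar n x) n.

Definition polya_cdf {R : realFieldType} (n : nat) (x : R) (t : R) : R :=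
  \sum_(k < n.+1 | (k%:R <= t)) polya_pmf n x k.

Definition st_le {R : realFieldType} (FX FY : R -> R) : Prop :=
  forall t : R, FY t <= FX t.

From mathcomp Require Import all_boot all_order all_algebra.
From mathcomp Require Import ring lra zify.
Import Order.TTheory GRing.Theory Num.Theory.
Set Implicit Arguments. Unset Strict Implicit.
Local Open Scope ring_scope.

(* Likelihood-ratio argument.  For j < k, the ratio P(X^(x) = k) / P(X^(x) = j)
   is, up to a factor independent of x, the product of the x + i c(x)
   (j <= i < k) divided by the product of the 1 - x + i c(x)
   (n - k <= i < n - j).  Since x + i c(x) = x - t min(x, 1 - x) with
   t = i / (n - 1) in [0, 1] and min(x, 1 - x) is 1-Lipschitz, these factors
   are nonnegative and nondecreasing in x; as c(1 - x) = c(x), the factors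
   1 - x + i c(x) are nonincreasing.  So the likelihood ratio of X^(y) to X^(x)
   is nondecreasing, and every down-set {k <= t} has less mass under X^(y).
   Both laws have total mass one by the Chu-Vandermonde identity for rising
   factorials. *)

Lemma sum_binS (R : pzSemiRingType) n (f : nat -> R) :
  \sum_(k < n.+2) 'C(n.+1, k)%:R * f k
  = \sum_(k < n.+1) 'C(n, k)%:R * (f k + f k.+1).
Proof.
rewrite big_ord_recl bin0.
under eq_bigr => i _ do rewrite binS natrD mulrDl.
under [RHS]eq_bigr do rewrite mulrDr.
rewrite !big_split /= addrA; congr (_ + _).
by rewrite [RHS]big_ord_recl bin0 big_ord_recr /= bin_small // mul0r addr0.
Qed.

Lemma sum_downset_mlr_le (R : realDomainType) n (p q : nat -> R) (P : pred nat) :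
  (forall j k, (j <= k)%N -> P k -> P j) ->
  (forall j k, (j < k <= n)%N -> q j * p k <= p j * q k) ->
  (\sum_(k < n.+1 | P k) q k) * \sum_(k < n.+1) p k
  <= (\sum_(k < n.+1 | P k) p k) * \sum_(k < n.+1) q k.
Proof.
move=> Pdown mlr.
have splitP (r : nat -> R) : \sum_(k < n.+1) r k
    = \sum_(k < n.+1 | P k) r k + \sum_(k < n.+1 | ~~ P k) r k.
  exact: (bigID (fun k : 'I_n.+1 => P k)).
rewrite !splitP.
set Fp := \sum_(k < n.+1 | P k) p k; set Fq := \sum_(k < n.+1 | P k) q k.
set Gp := \sum_(k < n.+1 | ~~ P k) p k; set Gq := \sum_(k < n.+1 | ~~ P k) q k.
have cross : Fq * Gp <= Fp * Gq.
  rewrite !mulr_suml; apply: ler_sum => j Pj; rewrite !mulr_sumr.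
  apply: ler_sum => k nPk; apply: mlr; rewrite leq_ord andbT.
  by rewrite ltnNge; apply: contra nPk => /Pdown; apply.
rewrite !mulrDr [Fq * Fp]mulrC; lra.
Qed.

Section RisingFactorial.
Variable R : realFieldType.
Implicit Types (z w h : R).

Lemma rfact0 z h : rfact z h 0 = 1.
Proof. by rewrite /rfact big_ord0. Qed.

Lemma rfactS z h m : rfact z h m.+1 = rfact z h m * (z + m%:R * h).
Proof. by rewrite /rfact big_ord_recr. Qed.

Lemma rfactD z h a b : rfact z h (a + b) = rfact z h a * rfact (z + a%:R * h) h b.
Proof.
rewrite /rfact big_split_ord; congr (_ * _).
by apply: eq_bigr => i _; rewrite /= natrD mulrDl addrA.
Qed.

Lemma rfactDn z w h n :
  rfact (z + w) h n = \sum_(k < n.+1) 'C(n, k)%:R * rfact z h k * rfact w h (n - k).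
Proof.
elim: n => [|n IHn]; first by rewrite big_ord1 !rfact0 !mul1r.
under [RHS]eq_bigr do rewrite -mulrA.
rewrite (sum_binS _ (fun k => rfact z h k * rfact w h (n.+1 - k))).
rewrite rfactS IHn mulr_suml; apply: eq_bigr => k _.
have le_kn : (k <= n)%N by rewrite -ltnS.
rewrite subSS subSn // !rfactS.
have -> : n%:R = (n - k)%:R + k%:R :> R by rewrite -natrD subnK.
ring.
Qed.

Lemma rfact_ge0 z h m : (forall i, (i < m)%N -> 0 <= z + i%:R * h) -> 0 <= rfact z h m.
Proof. by move=> ge0; apply: prodr_ge0 => i _; apply: ge0. Qed.

Lemma rfact_gt0 z h m : (forall i, (i < m)%N -> 0 < z + i%:R * h) -> 0 < rfact z h m.
Proof. by move=> gt0; apply: prodr_gt0 => i _; apply: gt0. Qed.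

Lemma ler_rfact z z' h h' m :
  (forall i, (i < m)%N -> 0 <= z + i%:R * h <= z' + i%:R * h') ->
  rfact z h m <= rfact z' h' m.
Proof. by move=> le_fact; apply: ler_prod => i _; apply: le_fact. Qed.

End RisingFactorial.

Section Polya.
Variable R : realFieldType.
Implicit Types (x y z : R).

(* For n = 1 this relies on 0 / 0 = 0. *)
Lemma step_ratio_itv01 n i : (i < n)%N -> 0 <= (i%:R / (n.-1)%:R : R) <= 1.
Proof.
case: n => // [[|n]] lt_in /=; rewrite divr_ge0 //=.
  by rewrite invr0 mulr0.
by rewrite ler_pdivrMr ?ltr0Sn // mul1r ler_nat.
Qed.

Lemma cparE n x z i :
  z + i%:R * cpar n x = z - i%:R / (n.-1)%:R * Num.min x (1 - x).
Proof. by rewrite /cpar; ring. Qed.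

Lemma cpar_compl n x : cpar n (1 - x) = cpar n x.
Proof. by rewrite /cpar subKr minC. Qed.

Lemma min_compl_lipschitz x y : x <= y -> Num.min y (1 - y) - Num.min x (1 - x) <= y - x.
Proof.
move=> le_xy.
have my_le_y : Num.min y (1 - y) <= y by rewrite ge_min lexx.
have my_le_1y : Num.min y (1 - y) <= 1 - y by rewrite ge_min lexx orbT.
by rewrite [Num.min x _]minEle; case: ifP => _; lra.
Qed.

Lemma polya_factor_ge0 n x i :
  0 <= x -> x <= 1 -> (i < n)%N -> 0 <= x + i%:R * cpar n x.
Proof.
move=> x_ge0 x_le1 /step_ratio_itv01 /andP[t_ge0 t_le1]; rewrite cparE.
have m_le_x : Num.min x (1 - x) <= x by rewrite ge_min lexx.
have m_ge0 : 0 <= Num.min x (1 - x) by rewrite le_min x_ge0 subr_ge0.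
nra.
Qed.

Lemma polya_factor_le n x y i :
  x <= y -> (i < n)%N -> x + i%:R * cpar n x <= y + i%:R * cpar n y.
Proof.
move=> le_xy /step_ratio_itv01 /andP[t_ge0 t_le1]; rewrite !cparE.
have := min_compl_lipschitz le_xy; nra.
Qed.

Lemma polya_den_gt0 n x : 0 <= x -> x <= 1 -> 0 < rfact 1 (cpar n x) n.
Proof.
move=> x_ge0 x_le1; apply: rfact_gt0 => i /step_ratio_itv01 /andP[t_ge0 t_le1].
rewrite cparE.
have m_le_x : Num.min x (1 - x) <= x by rewrite ge_min lexx.
have m_le_1x : Num.min x (1 - x) <= 1 - x by rewrite ge_min lexx orbT.
have m_ge0 : 0 <= Num.min x (1 - x) by rewrite le_min x_ge0 subr_ge0.
nra.
Qed.

Lemma polya_rfact_ge0 n x m :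
  0 <= x -> x <= 1 -> (m <= n)%N -> 0 <= rfact x (cpar n x) m.
Proof.
move=> x_ge0 x_le1 le_mn; apply: rfact_ge0 => i lt_im.
by rewrite polya_factor_ge0 // (leq_trans lt_im le_mn).
Qed.

Lemma polya_pmf_sum n x : 0 <= x -> x <= 1 -> \sum_(k < n.+1) polya_pmf n x k = 1.
Proof.
move=> x_ge0 x_le1; rewrite /polya_pmf -mulr_suml -rfactDn subrKC.
by rewrite divff // gt_eqF // polya_den_gt0.
Qed.

Lemma polya_tail_ge0 n x a m : 0 <= x -> x <= 1 -> (a + m <= n)%N ->
  0 <= rfact (x + a%:R * cpar n x) (cpar n x) m.
Proof.
move=> x_ge0 x_le1 le_amn; apply: rfact_ge0 => i lt_im.
by rewrite -addrA -mulrDl -natrD polya_factor_ge0 //; lia.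
Qed.

Lemma polya_tail_le n x y a m : 0 <= x -> x <= y -> y <= 1 -> (a + m <= n)%N ->
  rfact (x + a%:R * cpar n x) (cpar n x) m <= rfact (y + a%:R * cpar n y) (cpar n y) m.
Proof.
move=> x_ge0 le_xy y_le1 le_amn; apply: ler_rfact => i lt_im.
have x_le1 : x <= 1 by lra.
rewrite -!addrA -!mulrDl -natrD polya_factor_ge0 ?polya_factor_le //; lia.
Qed.

Lemma polya_pmf_mlr n x y j k : 0 <= x -> x <= y -> y <= 1 -> (j < k <= n)%N ->
  polya_pmf n y j * polya_pmf n x k <= polya_pmf n x j * polya_pmf n y k.
Proof.
move=> x_ge0 le_xy y_le1 /andP[lt_jk le_kn].
have x_le1 : x <= 1 by lra.
have y_ge0 : 0 <= y by lra.
have split_k z h : rfact z h k = rfact z h j * rfact (z + j%:R * h) h (k - j).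
  by rewrite -rfactD subnKC // ltnW.
have split_nj z h :
    rfact z h (n - j) = rfact z h (n - k) * rfact (z + (n - k)%:R * h) h (k - j).
  by rewrite -rfactD; congr rfact; lia.
rewrite /polya_pmf !split_k !split_nj.
set Zx := rfact (x + _) _ _; set Zy := rfact (y + _) _ _.
set Wx := rfact (1 - x + _) _ _; set Wy := rfact (1 - y + _) _ _.
have le_jkn : (j + (k - j) <= n)%N by lia.
have le_nkkj : (n - k + (k - j) <= n)%N by lia.
have Zx_ge0 : 0 <= Zx := polya_tail_ge0 x_ge0 x_le1 le_jkn.
have le_Z : Zx <= Zy := polya_tail_le x_ge0 le_xy y_le1 le_jkn.
have Wy_ge0 : 0 <= Wy by rewrite /Wy -cpar_compl polya_tail_ge0 //; lra.
have le_W : Wy <= Wx.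
  by rewrite /Wx /Wy -(cpar_compl n x) -(cpar_compl n y) polya_tail_le //; lra.
set K := 'C(n, j)%:R * 'C(n, k)%:R * rfact x (cpar n x) j * rfact y (cpar n y) j
  * rfact (1 - x) (cpar n x) (n - k) * rfact (1 - y) (cpar n y) (n - k)
  / rfact 1 (cpar n x) n / rfact 1 (cpar n y) n.
have K_ge0 : 0 <= K.
  have U_ge0 z : 0 <= z -> z <= 1 -> 0 <= rfact z (cpar n z) j.
    by move=> z_ge0 z_le1; rewrite polya_rfact_ge0 //; lia.
  have V_ge0 z : 0 <= z -> z <= 1 -> 0 <= rfact (1 - z) (cpar n z) (n - k).
    by move=> z_ge0 z_le1; rewrite -cpar_compl polya_rfact_ge0 ?leq_subr //; lra.
  have D_ge0 z : 0 <= z -> z <= 1 -> 0 <= (rfact 1 (cpar n z) n)^-1.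
    by move=> z_ge0 z_le1; rewrite invr_ge0 ltW // polya_den_gt0.
  by rewrite /K !mulr_ge0 ?ler0n ?U_ge0 ?V_ge0 ?D_ge0.
rewrite [leLHS](_ : _ = K * (Wy * Zx)); last by rewrite /K; ring.
rewrite [leRHS](_ : _ = K * (Wx * Zy)); last by rewrite /K; ring.
by rewrite ler_wpM2l // ler_pM.
Qed.

End Polya.

Theorem theorem3p2 (R : realFieldType) (n : nat) (hn : (2 <= n)%N) (x y : R) :
  0 <= x -> x <= y -> y <= 1 ->
  st_le (polya_cdf n x) (polya_cdf n y).
Proof.
move=> x_ge0 le_xy y_le1 t; rewrite /polya_cdf.
have x_le1 : x <= 1 by lra.
have y_ge0 : 0 <= y by lra.
have := @sum_downset_mlr_le R n (polya_pmf n x) (polya_pmf n y) (fun k => k%:R <= t).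
rewrite !polya_pmf_sum // !mulr1; apply.
- by move=> j k le_jk /= /(le_trans _); apply; rewrite ler_nat.
- by move=> j k; apply: polya_pmf_mlr.
Qed.
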